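(* Fix $\mu > 0$. Consider the following probabilistic model of distributed computation of $\mathbf{A}\mathbf{x}$ for $\mathbf{A} \in \mathbb{R}^{M\times N}$, $\mathbf{x}\in\mathbb{R}^N$, using $P$ processors. The time for a processor to compute a dot product of length $\ell$ is a random variable $T$ with $\Pr(T \le t) = 1 - \exp(-\mu(t/\ell - 1))$ for $t \ge \ell$ and $\Pr(T\le t)=0$ for $t<\ell$; the times of different processors are independent. The strategies are: (Uncoded) the $M$ rows are distributed among the $P$ processors, row $i$ being split into $P_i \in \{\lfloor P/M\rfloor, \lceil P/M\rceil\}$ blocks ($\sum_i P_i = P$), each processor computing one block (a dot product of length $N/P_i$); the computation finishes when all $P$ processors finish. (Repetition) each row is assigned to $P_i \in \{\lfloor P/M\rfloor, \lceil P/M\rceil\}$ processors ($\sum_i P_i=P$), each computing a full dot product of length $N$; the computation finishes when for every row at least one of its processors has finished. (MDS) each processor computes a dot product of length $N$; the computation finishes when any $M$ of the $P$ processors finish. (Short-Dot with parameter $K$) each processor computes a dot product of length $s = \frac{N}{P}(P-K+M)$; the computation finishes when any $K$ of the $P$ processors finish. Let $T_{UC}, T_{Rep}, T_{MDS}, T_{SD}$ denote the corresponding completion times. Suppose $M = M(P)$ scales as $P/\log P$ as $P \to \infty$, and Short-Dot is used with $K = P - M/2$. Then $\mathbb{E}[T_{SD}]/N = O\!\left(\frac{\log\log P}{\log P}\right)$, which tends to $0$ as $P\to\infty$, whereas $\mathbb{E}[T_{MDS}]/N$, $\mathbb{E}[T_{Rep}]/N$ and $\mathbb{E}[T_{UC}]/N$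 are all $\Omega(1)$, and so do not tend to $0$ as $P \to \infty$.
   Context: Asymptotic notation refers to $P \to \infty$ with $\mu$ fixed, uniformly in $N$. ''$M$ scales as $P/\log P$'' means $M(P) = \Theta(P/\log P)$; $M$ is taken to be an even positive integer so that $K = P - M/2$ is an integer (and $K > M$ holds for large $P$). $N$ is assumed divisible by the relevant block sizes so that dot-product lengths are integers. *)

From HB Require Import structures.
From mathcomp Require Import all_boot all_order all_algebra.
From mathcomp Require Import all_classical all_reals all_analysis.
Set Implicit Arguments. Unset Strict Implicit. Unset Printing Implicit Defensive.
Import Order.TTheory GRing.Theory Num.Theory.
Local Open Scope classical_set_scope.
Local Open Scope ring_scope.

Section Model.
Variable R : realType.

Definition shexp_cdf (mu l t : R) : R :=
  if t < l then 0 else 1 - expR (- (mu * (t / l - 1))).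

Definition has_proc_law d (T : measurableType d) (Pr : probability T R)
  (mu l : R) (X : T -> R) : Prop :=
  forall t : R, Pr [set w | X w <= t] = (shexp_cdf mu l t)%:E.

Definition indep_rvs d (T : measurableType d) (Pr : probability T R)
  (n : nat) (X : 'I_n -> T -> R) : Prop :=
  (forall j, measurable_fun setT (X j)) /\
  forall B : 'I_n -> set R, (forall j, measurable (B j)) ->
    Pr (\bigcap_(j in [set: 'I_n]) (X j @^-1` B j)) =
    (\prod_(j < n) fine (Pr (X j @^-1` B j)))%:E.

(* k-th smallest element (k >= 1) of a sequence of reals *)
Definition kth_smallest (k : nat) (s : seq R) : R :=
  nth 0 (sort <=%R s) k.-1.

Definition row_load (P M : nat) (rowOf : 'I_P -> 'I_M) (i : 'I_M) : nat :=
  #|[set j | rowOf j == i]|.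

(* admissible allocation: every row gets floor(P/M) or ceil(P/M) processors
   (the sum is automatically P since rowOf is a function on 'I_P) *)
Definition balanced_alloc (P M : nat) (rowOf : 'I_P -> 'I_M) : Prop :=
  forall i, (row_load rowOf i == (P %/ M)%N) || (row_load rowOf i == ((P + M.-1) %/ M)%N).

Definition T_UC (P : nat) T (X : 'I_P -> T -> R) (w : T) : R :=
  \big[Num.max/0]_(j < P) X j w.

Definition T_Rep (P M : nat) (rowOf : 'I_P -> 'I_M) T (X : 'I_P -> T -> R)
  (w : T) : R :=
  \big[Num.max/0]_(i < M)
     kth_smallest 1 [seq X j w | j <- enum 'I_P & rowOf j == i].

Definition T_MDS (P M : nat) T (X : 'I_P -> T -> R) (w : T) : R :=
  kth_smallest M [seq X j w | j <- enum 'I_P].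

Definition T_SD (P K : nat) T (X : 'I_P -> T -> R) (w : T) : R :=
  kth_smallest K [seq X j w | j <- enum 'I_P].

End Model.

(* Every processor time is at least its dot-product length, so the MDS and
   repetition completion times exceed [N/2] almost surely.  In the uncoded scheme
   each of the [P] times exceeds [l (1 + ln P / mu)], where [l ~ N M / P] is its
   length, with probability at least [1/P]; hence their maximum does so with
   probability at least [1 - (1 - 1/P)^P >= 1/2], and [l ln P] is of order [N].
   For Short-Dot, the [K]-th smallest of [P] numbers is at most [t] plus the sum of
   their excesses over [t] divided by [P - K + 1 > M/2].  At
   [t = s (1 + ln (P/M) / mu)] the expected excess of each time is at most
   [2 (s / mu) (M / P)], so [E T_SD <= s (1 + (ln (P/M) + 4) / mu)], which is
   [O(N ln ln P / ln P)] because [s <= 3 N M / (2 P)] and [ln (P/M) <= ln ln P + O(1)]. *)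

From mathcomp Require Import all_boot all_order all_algebra.
From mathcomp Require Import all_classical all_reals all_analysis.
From mathcomp Require Import measurable_realfun zify ring lra.
Set Implicit Arguments. Unset Strict Implicit. Unset Printing Implicit Defensive.
Import Order.TTheory GRing.Theory Num.Theory.
Local Open Scope classical_set_scope.
Local Open Scope ring_scope.

Section OrderStatistics.
Variable R : realType.

Lemma kth_smallest_in k (s : seq R) : (0 < k <= size s)%N -> kth_smallest k s \in s.
Proof.
move=> /andP[k0 ks]; rewrite /kth_smallest -(mem_sort <=%R) mem_nth // size_sort.
by rewrite (leq_trans _ ks) // prednK.
Qed.

Lemma kth_smallest_le_excess k (s : seq R) t : (0 < k <= size s)%N ->
  kth_smallest k s <= t + (\sum_(x <- s) Num.max (x - t) 0) / (size s - k).+1%:R.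
Proof.
move=> /andP[k0 ks].
rewrite -lerBlDl ler_pdivlMr ?ltr0n // mulrC.
set ss := sort <=%R s.
have sorted_ss : sorted <=%R ss := sort_sorted (@le_total _ R) s.
rewrite -(perm_big _ (permEl (perm_sort <=%R s))) -/ss /=.
rewrite -(cat_take_drop k.-1 ss) big_cat /=.
apply: ler_wpDl; first by apply: sumr_ge0 => x _; rewrite le_max lexx orbT.
have kss : (k.-1 < size ss)%N by rewrite size_sort prednK.
have path_tail : path <=%R (nth 0 ss k.-1) (drop k.-1.+1 ss).
  by have := drop_sorted k.-1 sorted_ss; rewrite (drop_nth 0 kss).
have tail_ge x : x \in drop k.-1 ss -> kth_smallest k s - t <= Num.max (x - t) 0.
  rewrite (drop_nth 0 kss) inE => /orP[/eqP->|xin]; first by rewrite le_max lexx.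
  have /allP/(_ x xin) := order_path_min (@le_trans _ R) path_tail.
  by rewrite le_max lerD2r => ->.
rewrite [X in _ <= X]big_seq.
apply: le_trans (ler_sum _ tail_ge).
rewrite -big_seq big_const_seq count_predT size_drop size_sort iter_addr_0 mulr_natl.
by have -> : (size s - k.-1 = (size s - k).+1)%N by lia.
Qed.

Lemma bigmin_le_kth_smallest n k a (x : 'I_n -> R) : (0 < k <= n)%N ->
  \big[Num.min/a]_(j < n) x j <= kth_smallest k [seq x j | j <- enum 'I_n].
Proof.
move=> kn; have /mapP[j _ ->] : kth_smallest k [seq x j | j <- enum 'I_n] \in
    [seq x j | j <- enum 'I_n] by apply: kth_smallest_in; rewrite size_map size_enum_ord.
exact: bigmin_le.
Qed.

Lemma bigmin_le_T_Rep P M (rowOf : 'I_P -> 'I_M) T (X : 'I_P -> T -> R) a w :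
  (0 < M)%N -> (forall i, 0 < row_load rowOf i)%N ->
  \big[Num.min/a]_(j < P) X j w <= T_Rep rowOf X w.
Proof.
move=> M0 load0; pose i0 : 'I_M := Ordinal M0.
apply: le_trans (le_bigmax _ _ i0).
have /card_gt0P[j0] := load0 i0; rewrite inE => j0i0.
set s := [seq X j w | j <- enum 'I_P & rowOf j == i0].
have s0 : (0 < size s)%N.
  by rewrite size_map -has_predT; apply/hasP; exists j0; rewrite // mem_filter j0i0 mem_enum.
have /mapP[j _ ->] : kth_smallest 1 s \in s by apply: kth_smallest_in; rewrite s0.
exact: bigmin_le.
Qed.

End OrderStatistics.

Section RealBounds.
Variable R : realType.

Lemma expRN1_le_half : expR (-1) <= 2^-1 :> R.
Proof.
rewrite expRN lef_pV2 ?posrE ?expR_gt0 //.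
by have := expR_ge1Dx (1 : R); rewrite (_ : 1 + 1 = 2 :> R).
Qed.

Lemma expr_subrV_le_expRN1 (n : nat) : (0 < n)%N -> (1 - n%:R^-1) ^+ n <= expR (-1) :> R.
Proof.
move=> n0; have n0' : 0 < n%:R :> R by rewrite ltr0n.
apply: (@le_trans _ _ (expR (- n%:R^-1) ^+ n)).
  apply: lerXn2r; rewrite ?nnegrE ?expR_ge0 ?expR_ge1Dx //.
  by rewrite subr_ge0 invf_le1 // ler1n.
by rewrite -expRM_natr mulNr mulVf ?gt_eqF.
Qed.

Lemma nneseries_expr_le (r : R) : 0 < r < 1 ->
  (\sum_(k <oo) (r ^+ k)%:E <= ((1 - r)^-1)%:E)%E.
Proof.
move=> /andP[r0 r1]; apply: lime_le.
  by apply: is_cvg_nneseries => k _; rewrite lee_fin exprn_ge0 // ltW.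
apply: nearW => n; rewrite sumEFin lee_fin.
have := @geometric_le_lim R n 1 r ler01 r0; rewrite mul1r gtr0_norm // => /(_ r1).
by rewrite exprn_geometric /series /=.
Qed.

Lemma excess_le_step_series (x t dl : R) : 0 < dl ->
  ((Num.max (x - t) 0)%:E <= dl%:E * \sum_(k <oo) (\1_[set y | t + k%:R * dl < y] x)%:E)%E.
Proof.
move=> dl0.
have [xt|tx] := leP x t.
  rewrite max_r ?subr_le0 //; apply: mule_ge0; first by rewrite lee_fin ltW.
  by apply: nneseries_ge0 => k _ _; rewrite lee_fin.
have [n ltxn minn] : exists2 n, x - t <= n%:R * dl & forall k, (k < n)%N -> t + k%:R * dl < x.
  have ex : exists n, x - t <= n%:R * dl.
    by exists (Num.truncn ((x - t) / dl)).+1; rewrite -ler_pdivrMr // ltW // truncnS_gt.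
  case: (ex_minnP ex) => n hn hmin; exists n => // k kn.
  by rewrite -ltrBrDl ltNge; apply/negP => /hmin; rewrite leqNgt kn.
rewrite max_l; last by rewrite subr_ge0 ltW.
apply: (@le_trans _ _ (dl%:E * (n%:R)%:E)%E); first by rewrite -EFinM lee_fin mulrC.
apply: lee_pmul => //; first by rewrite lee_fin ltW.
apply: le_trans (@nneseries_lim_ge _ _ xpredT 0 n _); last by move=> k _ _; rewrite lee_fin.
have -> : n%:R = \sum_(0 <= i < n) (1 : R) by rewrite sumr_const_nat subn0.
rewrite sumEFin lee_fin.
by apply: ler_sum_nat => k /andP[_ kn]; rewrite indicE mem_set //= minn.
Qed.

End RealBounds.

(* No measurability is required, so completion times can be bounded pointwise
   without proving them measurable. *)
Lemma le_integral_pointwise d (T : measurableType d) (R : realType)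
    (mu : {measure set T -> \bar R}) (f g : T -> \bar R) :
  (forall x, (f x <= g x)%E) -> (\int[mu]_x f x <= \int[mu]_x g x)%E.
Proof.
move=> fg; rewrite /integral; apply: leeB.
- apply: ereal_sup_le => _ [h /= hf <-]; exists h => //= x; apply: le_trans (hf x) _.
  by rewrite !funeposE !patch_setT le_max2.
- apply: ereal_sup_le => _ [h /= hf <-]; exists h => //= x; apply: le_trans (hf x) _.
  by rewrite !funenegE !patch_setT le_max2 // leeN2.
Qed.

Section MeasurableSets.
Context (R : realType) d (T : measurableType d).

Lemma measurable_gtr (a : R) : measurable [set y : R | a < y].
Proof.
rewrite (_ : [set y | a < y] = `]a, +oo[%classic); first exact: measurable_itv.
by apply/seteqP; split=> y /=; rewrite in_itv /= andbT.
Qed.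

Lemma measurable_ler (a : R) : measurable [set y : R | y <= a].
Proof.
rewrite (_ : [set y | y <= a] = `]-oo, a]%classic); first exact: measurable_itv.
by apply/seteqP; split=> y /=; rewrite in_itv.
Qed.

Lemma measurable_preimageT (X : T -> R) (B : set R) :
  measurable_fun setT X -> measurable B -> measurable (X @^-1` B).
Proof. by move=> mX mB; rewrite -[X @^-1` B]setTI; exact: mX. Qed.

End MeasurableSets.

Section ProcessorTimes.
Context (R : realType) d (T : measurableType d) (Pr : probability T R) (mu : R).

Lemma probability_proc_gt (l a : R) (X : T -> R) :
  has_proc_law Pr mu l X -> measurable_fun setT X -> l <= a ->
  Pr [set w | a < X w] = (expR (- (mu * (a / l - 1))))%:E.
Proof.
move=> hX mX la.
rewrite (_ : [set w | a < X w] = ~` [set w | X w <= a]); last first.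
  by apply/seteqP; split=> w /=; rewrite ltNge => /negP.
rewrite probability_setC; last exact: measurable_preimageT mX (measurable_ler a).
by rewrite hX /shexp_cdf ltNge la /= -EFinB; congr (_%:E); ring.
Qed.

Lemma probability_all_gt n (a : R) (l : 'I_n -> R) (X : 'I_n -> T -> R) :
  indep_rvs Pr X -> (forall j, has_proc_law Pr mu (l j) (X j)) -> (forall j, a < l j) ->
  Pr (\bigcap_(j in [set: 'I_n]) [set w | a < X j w]) = 1%E.
Proof.
move=> [mX indepX] hX al.
rewrite (indepX (fun _ => [set y | a < y])); last by move=> j; exact: measurable_gtr.
rewrite big1 // => j _.
rewrite (_ : X j @^-1` _ = ~` [set w | X j w <= a]); last first.
  by apply/seteqP; split=> w /=; rewrite ltNge => /negP.
rewrite probability_setC; last exact: measurable_preimageT (mX j) (measurable_ler a).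
by rewrite hX /shexp_cdf al sube0.
Qed.

(* All times exceed [a] almost surely, so the measurable minorant
   [min(a, min_j X j)] equals [a] almost everywhere. *)
Lemma integral_ge_of_bigmin n (a : R) (l : 'I_n -> R) (X : 'I_n -> T -> R) (f : T -> R) :
  indep_rvs Pr X -> (forall j, has_proc_law Pr mu (l j) (X j)) -> (forall j, a < l j) ->
  (forall w, \big[Num.min/a]_(j < n) X j w <= f w) ->
  (a%:E <= \int[Pr]_w (f w)%:E)%E.
Proof.
move=> indepX hX al minf; have [mX _] := indepX.
set A := \bigcap_(j in [set: 'I_n]) [set w | a < X j w].
have mA : measurable A.
  apply: fin_bigcap_measurable; first exact: finite_finset.
  by move=> j _; exact: measurable_preimageT (mX j) (measurable_gtr a).
have PrA : Pr A = 1%E := probability_all_gt indepX hX al.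
set L := fun w => \big[Num.min/a]_(j < n) X j w.
have mL : measurable_fun setT L.
  rewrite /L; elim: (index_enum _) => [|j r IH].
    by under eq_fun do rewrite big_nil; exact: measurable_cst.
  by under eq_fun do rewrite big_cons; exact: measurable_minr.
apply: (@le_trans _ _ (\int[Pr]_w (L w)%:E)%E); last first.
  by apply: le_integral_pointwise => w; rewrite lee_fin minf.
rewrite (@ae_eq_integral _ _ _ Pr setT (cst a%:E)) //.
- by rewrite integral_cst // [X in (_ * X)%E]probability_setT mule1.
- exact/measurable_EFinP.
- exists (~` A); split; first exact: measurableC.
    by rewrite [LHS]probability_setC // PrA subee.
  move=> w /= hw Aw; apply: hw => _; congr (_%:E).
  by apply: bigmin_eq_id => j _; apply: ltW; exact: (Aw j I).
Qed.

End ProcessorTimes.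

Lemma mul_measure_le_integral d (T : measurableType d) (R : realType)
    (mu : {measure set T -> \bar R}) (t : R) (B : set T) (f : T -> R) :
  0 <= t -> measurable B -> (forall w, 0 <= f w) -> (forall w, B w -> t <= f w) ->
  (t%:E * mu B <= \int[mu]_w (f w)%:E)%E.
Proof.
move=> t0 mB f0 Btf.
have ind0 w : setT w -> (0 <= (\1_B w : R)%:E)%E by rewrite lee_fin.
have mind : measurable_fun setT (fun w => (\1_B w : R)%:E).
  exact/measurable_EFinP/measurable_indic.
rewrite (_ : mu B = \int[mu]_w (\1_B w : R)%:E)%E; last by rewrite integral_indic // setIT.
rewrite -ge0_integralZl_EFin //.
apply: le_integral_pointwise => w; rewrite -EFinM lee_fin indicE.
by case: (boolP (w \in B)) => [/set_mem/Btf|_]; rewrite ?mulr1 ?mulr0.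
Qed.

Section ProcessorCdf.
Variables (R : realType) (mu : R).
Hypothesis mu0 : 0 < mu.

Lemma shexp_cdf_ge0 (l t : R) : 0 < l -> 0 <= shexp_cdf mu l t.
Proof.
move=> l0; rewrite /shexp_cdf; case: ifPn => //; rewrite -leNgt => lt.
rewrite subr_ge0 expR_le1 oppr_le0; apply: mulr_ge0; first exact: ltW.
by rewrite subr_ge0 ler_pdivlMr // mul1r.
Qed.

Lemma shexp_cdf_le (l0 l c : R) : 0 < l0 <= l -> 0 <= c ->
  shexp_cdf mu l (l0 * (1 + c / mu)) <= 1 - expR (- c).
Proof.
move=> /andP[l00 l0l] c0; have l_gt0 := lt_le_trans l00 l0l.
rewrite /shexp_cdf; case: ifP => _; first by rewrite subr_ge0 expR_le1 oppr_le0.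
rewrite lerD2l lerN2 ler_expR lerN2.
have cmu0 : 0 <= 1 + c / mu by rewrite addr_ge0 // divr_ge0 // ltW.
have ratio : l0 * (1 + c / mu) / l - 1 <= c / mu.
  by rewrite lerBlDl ler_pdivrMr // mulrC ler_wpM2l.
apply: le_trans (ler_wpM2l (ltW mu0) ratio) _.
by rewrite mulrCA divff ?gt_eqF ?mulr1.
Qed.

End ProcessorCdf.

Section Expectations.
Context (R : realType) d (T : measurableType d) (Pr : probability T R) (mu : R).
Hypothesis mu0 : 0 < mu.

Lemma expectation_T_UC_ge P (l0 : R) (l : 'I_P -> R) (X : 'I_P -> T -> R) :
  (1 < P)%N -> 0 < l0 -> (forall j, l0 <= l j) ->
  indep_rvs Pr X -> (forall j, has_proc_law Pr mu (l j) (X j)) ->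
  ((l0 * (1 + ln P%:R / mu) / 2)%:E <= \int[Pr]_w (T_UC X w)%:E)%E.
Proof.
move=> P1 l00 l0l indepX hX; have [mX indep] := indepX.
have P0 : 0 < P%:R :> R by rewrite ltr0n ltnW.
have lnP0 : 0 <= ln (P%:R : R) by rewrite ln_ge0 // ler1n ltnW.
set t := l0 * (1 + ln P%:R / mu).
have t0 : 0 <= t.
  by apply: mulr_ge0; [exact: ltW | rewrite addr_ge0 // divr_ge0 // ltW].
set C := \bigcap_(j in [set: 'I_P]) [set w | X j w <= t].
have mC : measurable C.
  apply: fin_bigcap_measurable; first exact: finite_finset.
  by move=> j _; exact: measurable_preimageT (mX j) (measurable_ler t).
set p := \prod_(j < P) shexp_cdf mu (l j) t.
have PrC : Pr C = p%:E.
  rewrite /C (indep (fun _ => [set y | y <= t])); last by move=> j; exact: measurable_ler.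
  by congr (_%:E); apply: eq_bigr => j _; rewrite hX.
(* [p] is a product of [P] factors at most [1 - 1/P], and [(1 - 1/P)^P <= 1/e]. *)
have p_le_half : p <= 2^-1.
  apply: le_trans _ (expRN1_le_half R).
  apply: le_trans _ (expr_subrV_le_expRN1 R (ltnW P1)).
  rewrite -[X in _ <= _ ^+ X](card_ord P) -prodr_const.
  apply: ler_prod => j _; rewrite shexp_cdf_ge0 //=; last exact: lt_le_trans l00 _.
  have l0lj : 0 < l0 <= l j by rewrite l00 l0l.
  by have := shexp_cdf_le mu0 l0lj lnP0; rewrite expRN lnK ?posrE.
have half_le : ((t / 2)%:E <= t%:E * Pr (~` C))%E.
  rewrite probability_setC // PrC -EFinB -EFinM lee_fin.
  have : 2^-1 <= 1 - p by lra.
  by move/(ler_wpM2l t0).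
apply: le_trans half_le _.
apply: (mul_measure_le_integral _ t0 (measurableC mC)) => [w|w notC].
  exact: bigmax_ge_id.
have [j tXj] : exists j, t < X j w.
  apply: contrapT => none; apply: notC => j _ /=.
  by rewrite leNgt; apply/negP => tXj; apply: none; exists j.
exact: le_trans (ltW tXj) (le_bigmax _ _ j).
Qed.

Lemma expectation_excess_le (l t : R) (X : T -> R) :
  0 < l -> l <= t -> has_proc_law Pr mu l X -> measurable_fun setT X ->
  (\int[Pr]_w (Num.max (X w - t) 0)%:E <=
     (2 * (l / mu) * expR (- (mu * (t / l - 1))))%:E)%E.
Proof.
move=> l0 lt hX mX.
set dl := l / mu; have dl0 : 0 < dl by exact: divr_gt0.
set q := expR (- (mu * (t / l - 1))).
pose E k := X @^-1` [set y | t + k%:R * dl < y].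
have mE k : measurable (E k) by exact: measurable_preimageT mX (measurable_gtr _).
have PrE k : Pr (E k) = (q * expR (-1) ^+ k)%:E.
  have ltk : l <= t + k%:R * dl.
    by apply: le_trans lt _; rewrite lerDl; apply: mulr_ge0 => //; exact: ltW.
  rewrite (probability_proc_gt hX mX ltk) -expRM_natl -expRD; congr (expR _)%:E.
  by rewrite /dl; field; rewrite !gt_eqF.
have ind0 k w : setT w -> (0 <= (\1_(E k) w : R)%:E)%E by rewrite lee_fin.
have mind k : measurable_fun setT (fun w => (\1_(E k) w : R)%:E).
  exact/measurable_EFinP/measurable_indic.
apply: (@le_trans _ _ (\int[Pr]_w (dl%:E * \sum_(k <oo) (\1_(E k) w : R)%:E))%E).
  by apply: le_integral_pointwise => w; exact: excess_le_step_series.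
have series0 w : setT w -> (0 <= \sum_(k <oo) (\1_(E k) w : R)%:E)%E.
  by move=> _; apply: nneseries_ge0 => k _ _; rewrite lee_fin.
have mseries : measurable_fun setT (fun w => \sum_(k <oo) (\1_(E k) w : R)%:E)%E.
  by apply: ge0_emeasurable_sum => // k w _; exact: ind0.
rewrite (ge0_integralZl_EFin _ _ series0 mseries) ?(ltW dl0) //.
rewrite integral_nneseries //.
have intE k : (\int[Pr]_w (\1_(E k) w : R)%:E = (q * expR (-1) ^+ k)%:E)%E.
  by rewrite integral_indic // setIT; exact: PrE.
under eq_eseriesr do rewrite intE EFinM.
rewrite nneseriesZl; last by move=> k _; rewrite lee_fin exprn_ge0 // expR_ge0.
have geo : (\sum_(k <oo) (expR (-1) ^+ k)%:E <= 2%:E :> \bar R)%E.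
  apply: le_trans (nneseries_expr_le _) _; first by rewrite expR_gt0 expR_lt1 ltrN10.
  have := expRN1_le_half R; rewrite lee_fin => r_half.
  have r_pos : 0 < 1 - expR (-1) :> R by lra.
  by rewrite -[2]invrK lef_pV2 ?posrE ?invr_gt0 //; lra.
rewrite (_ : 2 * dl * q = dl * (q * 2)); last by ring.
rewrite !EFinM; apply: lee_wpmul2l; first by rewrite lee_fin ltW.
by apply: lee_wpmul2l => //; rewrite lee_fin expR_ge0.
Qed.

Lemma expectation_kth_smallest_le P K (l t : R) (X : 'I_P -> T -> R) :
  0 < l -> l <= t -> (0 < K <= P)%N ->
  (forall j, measurable_fun setT (X j)) -> (forall j, has_proc_law Pr mu l (X j)) ->
  (\int[Pr]_w (kth_smallest K [seq X j w | j <- enum 'I_P])%:E <=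
     (t + P%:R / (P - K).+1%:R * (2 * (l / mu) * expR (- (mu * (t / l - 1)))))%:E)%E.
Proof.
move=> l0 lt KP mX hX.
set b := 2 * (l / mu) * expR _; set m := (P - K).+1.
have t0 : 0 <= t by apply: le_trans lt; exact: ltW.
pose Y j w := (Num.max (X j w - t) 0)%:E.
have Y0 j w : setT w -> (0 <= Y j w)%E by rewrite lee_fin le_max lexx orbT.
have mY j : measurable_fun setT (Y j).
  apply/measurable_EFinP/measurable_maxr => //.
  exact: measurable_funB (mX j) (measurable_cst _).
have sumY0 w : setT w -> (0 <= \sum_(j < P) Y j w)%E.
  by move=> _; apply: sume_ge0 => j _; exact: Y0.
have msumY : measurable_fun setT (fun w => \sum_(j < P) Y j w)%E.
  exact: emeasurable_sum.
apply: (@le_trans _ _ (\int[Pr]_w (t%:E + (m%:R^-1)%:E * (\sum_(j < P) Y j w)%E))%E).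
  apply: le_integral_pointwise => w.
  have := @kth_smallest_le_excess R K [seq X j w | j <- enum 'I_P] t.
  rewrite size_map size_enum_ord big_map big_enum /= => /(_ KP) kth_le.
  rewrite /Y sumEFin -EFinM -EFinD lee_fin mulrC.
  exact: kth_le.
have scaled0 w : setT w -> (0 <= (m%:R^-1)%:E * (\sum_(j < P) Y j w)%E)%E.
  by move=> _; rewrite mule_ge0 ?lee_fin ?invr_ge0 // sumY0.
rewrite ge0_integralD //; last exact: measurable_funeM.
rewrite integral_cst // [X in (_ * X)%E]probability_setT mule1.
rewrite ge0_integralZl_EFin ?invr_ge0 // ge0_integral_sum // EFinD leeD2l //.
rewrite (_ : P%:R / m%:R * b = m%:R^-1 * (P%:R * b)); last by ring.
rewrite EFinM; apply: lee_wpmul2l; first by rewrite lee_fin invr_ge0.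
apply: (@le_trans _ _ (\sum_(j < P) b%:E)%E).
  by apply: lee_sum => j _; exact: expectation_excess_le.
by rewrite sumEFin lee_fin sumr_const card_ord mulr_natl.
Qed.

End Expectations.

Section Allocation.
Variables (P M : nat) (rowOf : 'I_P -> 'I_M).
Hypothesis balanced : balanced_alloc rowOf.

Lemma row_load_gt0 i : (0 < M <= P)%N -> (0 < row_load rowOf i)%N.
Proof.
move=> /andP[M0 MP]; case/orP: (balanced i) => /eqP ->; rewrite divn_gt0 //.
exact: leq_trans MP (leq_addr _ _).
Qed.

Lemma row_load_le i : (row_load rowOf i <= (P + M.-1) %/ M)%N.
Proof. by case/orP: (balanced i) => /eqP ->; rewrite // leq_div2r // leq_addr. Qed.

End Allocation.

Section Schemes.
Context (R : realType) d (T : measurableType d) (Pr : probability T R) (mu : R).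

Lemma expectation_T_MDS_ge P M N (X : 'I_P -> T -> R) :
  (0 < M <= P)%N -> (0 < N)%N -> indep_rvs Pr X ->
  (forall j, has_proc_law Pr mu N%:R (X j)) ->
  ((2^-1 * N%:R)%:E <= \int[Pr]_w (T_MDS M X w)%:E)%E.
Proof.
move=> MP N0 indepX hX; apply: (integral_ge_of_bigmin indepX hX) => [j|w].
  by rewrite -[ltRHS]mul1r ltr_pM2r ?ltr0n // invf_lt1 ?ltr1n.
exact: bigmin_le_kth_smallest.
Qed.

Lemma expectation_T_Rep_ge P M N (rowOf : 'I_P -> 'I_M) (X : 'I_P -> T -> R) :
  (0 < M <= P)%N -> balanced_alloc rowOf -> (0 < N)%N -> indep_rvs Pr X ->
  (forall j, has_proc_law Pr mu N%:R (X j)) ->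
  ((2^-1 * N%:R)%:E <= \int[Pr]_w (T_Rep rowOf X w)%:E)%E.
Proof.
move=> MP balanced N0 indepX hX; apply: (integral_ge_of_bigmin indepX hX) => [j|w].
  by rewrite -[ltRHS]mul1r ltr_pM2r ?ltr0n // invf_lt1 ?ltr1n.
apply: bigmin_le_T_Rep; first by case/andP: MP.
by move=> i; exact: row_load_gt0.
Qed.

Lemma expectation_T_SD_le P M N (X : 'I_P -> T -> R) :
  0 < mu -> (0 < M <= P)%N -> (0 < N)%N -> indep_rvs Pr X ->
  (forall j, has_proc_law Pr mu
     (N%:R * (P%:R - (P - M %/ 2)%N%:R + M%:R) / P%:R) (X j)) ->
  (\int[Pr]_w (T_SD (P - M %/ 2) X w)%:E <=
     (N%:R * (P%:R - (P - M %/ 2)%N%:R + M%:R) / P%:R *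
        (1 + (ln (P%:R / M%:R) + 4) / mu))%:E)%E.
Proof.
move=> mu0 /andP[M0 MP] N0 [mX _] hX.
have halfMP : (M %/ 2 <= P)%N := leq_trans (leq_div M 2) MP.
have P0 : 0 < P%:R :> R by rewrite ltr0n (leq_trans M0 MP).
have M0' : 0 < M%:R :> R by rewrite ltr0n.
rewrite natrB // opprB addrCA subrr addr0 in hX *.
set s := N%:R * _ / P%:R; set L := ln (P%:R / M%:R).
have s0 : 0 < s by rewrite divr_gt0 // mulr_gt0 ?ltr0n // ltr_wpDl ?ler0n.
have L0 : 0 <= L by rewrite ln_ge0 // ler_pdivlMr // mul1r ler_nat.
have KP : (0 < P - M %/ 2 <= P)%N.
  by rewrite leq_subr subn_gt0 (leq_trans _ MP) // ltn_Pdiv.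
(* at [t = s (1 + L / mu)] each time exceeds [t] with probability [M / P] *)
have st : s <= s * (1 + L / mu).
  apply: ler_peMr; first exact: ltW.
  by rewrite lerDl; exact: divr_ge0 L0 (ltW mu0).
apply: le_trans (expectation_kth_smallest_le mu0 s0 st KP mX hX) _.
rewrite lee_fin subKn //.
rewrite (_ : - (mu * (s * (1 + L / mu) / s - 1)) = - L); last by field; rewrite !gt_eqF.
rewrite expRN lnK ?posrE ?divr_gt0 // invf_div.
have M_le : M%:R <= 2 * (M %/ 2).+1%:R :> R by rewrite -natrM ler_nat; lia.
set m := (M %/ 2).+1%:R in M_le *.
have m0 : 0 < m by rewrite ltr0n.
rewrite (_ : P%:R / m * (2 * (s / mu) * (M%:R / P%:R)) = 2 * (s / mu) * (M%:R / m)); last first.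
  by field; rewrite !gt_eqF.
have Mm : M%:R / m <= 2 by rewrite ler_pdivrMr // mulrC.
rewrite (_ : s * (1 + (L + 4) / mu) = s * (1 + L / mu) + 4 * (s / mu)); last first.
  by field; rewrite gt_eqF.
rewrite lerD2l mulrAC ler_pM2r; last exact: divr_gt0.
by apply: le_trans (ler_wpM2l (ler0n _ 2) Mm) _; lra.
Qed.

End Schemes.

Section Asymptotics.
Variables (R : realType) (mu c1 c2 : R).

Definition in_regime (P M : nat) :=
  [/\ (1 < P)%N, (0 < M <= P)%N, c1 <= ln (P%:R : R), expR 1 <= ln (P%:R : R)
    & c1 * (P%:R / ln P%:R) <= M%:R <= c2 * (P%:R / ln P%:R)].

Lemma in_regime_eventually (Mf : nat -> nat) (P0 : nat) : 0 < c1 -> 0 < c2 ->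
  (forall P, (P0 <= P)%N -> (0 < Mf P)%N /\ ~~ odd (Mf P) /\
     c1 * (P%:R / ln P%:R) <= (Mf P)%:R /\ (Mf P)%:R <= c2 * (P%:R / ln P%:R)) ->
  exists Pb, forall P, (Pb <= P)%N -> in_regime P (Mf P).
Proof.
move=> c10 c20 hM; exists (maxn P0 (maxn 2 (Num.truncn (expR (c1 + c2 + expR 1))).+1)) => P.
rewrite !geq_max => /and3P[P0P P2 PB].
have [M0 [_ [lo hi]]] := hM P P0P.
have P_gt0 : 0 < P%:R :> R by rewrite ltr0n (leq_trans _ P2).
have lnB : c1 + c2 + expR 1 <= ln (P%:R : R).
  rewrite -[_ + expR 1]expRK ler_ln ?posrE ?expR_gt0 //.
  by apply: ltW; apply: lt_le_trans (truncnS_gt _) _; rewrite ler_nat.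
have e0 : 0 < expR 1 :> R := expR_gt0 1.
have lnP0 : 0 < ln (P%:R : R) by lra.
split => //; [|lra|lra|by rewrite lo hi].
rewrite M0 -(ler_nat R); apply: le_trans hi _.
rewrite -[leRHS](divfK (lt0r_neq0 lnP0)) [leRHS]mulrC.
by apply: ler_wpM2r; [apply: divr_ge0; exact: ltW | lra].
Qed.

Lemma ln_ratio_le P M : 0 < c1 -> in_regime P M ->
  ln (P%:R / M%:R) <= ln (ln (P%:R : R)) + `|ln c1|.
Proof.
move=> c10 [P1 /andP[M0 _] _ _ /andP[lo _]].
have lnP0 : 0 < ln (P%:R : R) by rewrite ln_gt0 // ltr1n.
have M_gt0 : 0 < M%:R :> R by rewrite ltr0n.
have ratio : P%:R / M%:R <= ln (P%:R : R) / c1.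
  rewrite ler_pdivrMr //.
  have := ler_wpM2l (divr_ge0 (ltW lnP0) (ltW c10)) lo.
  by rewrite mulrA divfK ?lt0r_neq0 // mulrC divfK ?lt0r_neq0.
apply: le_trans (_ : ln (ln (P%:R : R) / c1) <= _).
  by rewrite ler_ln ?posrE ?divr_gt0 // ltr0n (ltnW P1).
by rewrite lnM ?posrE ?invr_gt0 // lnV ?posrE // lerD2l -normrN ler_norm.
Qed.

Lemma short_dot_length_le P M N : in_regime P M ->
  N%:R * (P%:R - (P - M %/ 2)%N%:R + M%:R) / P%:R <= 3 / 2 * c2 / ln (P%:R : R) * N%:R.
Proof.
move=> [P1 /andP[M0 MP] _ _ /andP[_ hi]].
have P_gt0 : 0 < P%:R :> R by rewrite ltr0n (ltnW P1).
have lnP0 : 0 < ln (P%:R : R) by rewrite ln_gt0 // ltr1n.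
rewrite natrB ?(leq_trans (leq_div M 2) MP) // opprB addrCA subrr addr0.
have half_le : (M %/ 2)%N%:R * 2 <= M%:R :> R by rewrite -natrM ler_nat leq_trunc_div.
have MP_le : M%:R / P%:R <= c2 / ln (P%:R : R).
  by rewrite ler_pdivrMr // (le_trans hi) // mulrA mulrAC.
have frac : ((M %/ 2)%N%:R + M%:R) / P%:R <= 3 / 2 * c2 / ln (P%:R : R).
  apply: le_trans (_ : 3 / 2 * (M%:R / P%:R) <= _); last first.
    by rewrite -[leRHS]mulrA; apply: ler_wpM2l; [lra | exact: MP_le].
  by rewrite mulrA ler_wpM2r ?invr_ge0 ?ler0n //; lra.
by rewrite -mulrA [leRHS]mulrC ler_wpM2l.
Qed.

Lemma short_dot_rate P M N : 0 < mu -> 0 < c1 -> in_regime P M ->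
  N%:R * (P%:R - (P - M %/ 2)%N%:R + M%:R) / P%:R * (1 + (ln (P%:R / M%:R) + 4) / mu)
  <= 3 / 2 * c2 * (1 + (5 + `|ln c1|) / mu) * (ln (ln P%:R) / ln P%:R) * N%:R.
Proof.
move=> mu0 c10 regime; have s_le := short_dot_length_le N regime.
have ratio_le := ln_ratio_le c10 regime.
move: regime => [P1 /andP[M0 MP] _ eL _].
have lnP0 : 0 < ln (P%:R : R) by rewrite ln_gt0 // ltr1n.
have lnlnP1 : 1 <= ln (ln (P%:R : R)) by rewrite -[leLHS](expRK 1) ler_ln ?posrE ?expR_gt0.
have ratio0 : 0 <= ln (P%:R / M%:R : R).
  by rewrite ln_ge0 // ler_pdivlMr ?ltr0n // mul1r ler_nat.
set s := _ / P%:R in s_le *; set LL := ln (ln _) in lnlnP1 ratio_le *.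
set a := `|ln c1| in ratio_le *; have a0 : 0 <= a := normr_ge0 _.
have s0 : 0 <= s.
  rewrite /s divr_ge0 // mulr_ge0 // natrB ?(leq_trans (leq_div M 2) MP) //.
  by rewrite opprB addrCA subrr addr0 addr_ge0.
have factor_le : 1 + (ln (P%:R / M%:R) + 4) / mu <= LL * (1 + (5 + a) / mu).
  have h1 : 0 <= (LL - 1) * (1 + (4 + a) / mu).
    by apply: mulr_ge0; [lra | apply: addr_ge0 => //; apply: divr_ge0; lra].
  have h2 : 0 <= (LL + a - ln (P%:R / M%:R)) / mu by apply: divr_ge0; lra.
  rewrite -subr_ge0 (_ : _ - _ = (LL - 1) * (1 + (4 + a) / mu) + (LL + a - ln (P%:R / M%:R)) / mu).
    exact: addr_ge0.
  by field; rewrite gt_eqF.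
apply: le_trans (ler_pM s0 _ s_le factor_le) _.
  by rewrite addr_ge0 // divr_ge0 ?ltW //; lra.
by rewrite le_eqVlt; apply/orP; left; apply/eqP; ring.
Qed.

Lemma ceil_ratio_le_ln P M : 0 < c1 -> in_regime P M ->
  c1 * ((P + M.-1) %/ M)%:R <= 2 * ln (P%:R : R).
Proof.
move=> c10 [P1 /andP[M0 _] c1L _ /andP[lo _]].
have lnP0 : 0 < ln (P%:R : R) by rewrite ln_gt0 // ltr1n.
have M_gt0 : 0 < M%:R :> R by rewrite ltr0n.
have ceil_le : ((P + M.-1) %/ M)%:R * M%:R <= P%:R + M%:R :> R.
  rewrite -natrM -natrD ler_nat (leq_trans (leq_trunc_div _ _)) //.
  by rewrite leq_add2l leq_pred.
have cross : c1 * P%:R <= M%:R * ln (P%:R : R).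
  have := ler_wpM2r (ltW lnP0) lo.
  by rewrite -mulrA divfK ?lt0r_neq0 // mulrC.
rewrite -(ler_pM2r M_gt0) -mulrA; nra.
Qed.

Lemma expectation_T_UC_regime_ge d (T : measurableType d) (Pr : probability T R)
    P M N (rowOf : 'I_P -> 'I_M) (X : 'I_P -> T -> R) :
  0 < mu -> 0 < c1 -> in_regime P M -> balanced_alloc rowOf -> (0 < N)%N ->
  indep_rvs Pr X ->
  (forall j, has_proc_law Pr mu (N%:R / (row_load rowOf (rowOf j))%:R) (X j)) ->
  ((c1 / (4 * mu) * N%:R)%:E <= \int[Pr]_w (T_UC X w)%:E)%E.
Proof.
move=> mu0 c10 regime balanced N0 indepX hX.
have ceil_le := ceil_ratio_le_ln c10 regime.
move: regime => [P1 MP _ _ _].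
set U := ((P + M.-1) %/ M)%:R in ceil_le *.
have U0 : 0 < U.
  have [M0 MleP] := andP MP; rewrite ltr0n divn_gt0 //.
  exact: leq_trans MleP (leq_addr _ _).
have N_gt0 : 0 < N%:R :> R by rewrite ltr0n.
have lnP0 : 0 < ln (P%:R : R) by rewrite ln_gt0 // ltr1n.
have l0l j : N%:R / U <= N%:R / (row_load rowOf (rowOf j))%:R.
  have load0 : 0 < (row_load rowOf (rowOf j))%:R :> R by rewrite ltr0n row_load_gt0.
  by rewrite ler_pM2l // lef_pV2 ?posrE // ler_nat row_load_le.
apply: le_trans (expectation_T_UC_ge mu0 P1 (divr_gt0 N_gt0 U0) l0l indepX hX).
rewrite lee_fin (_ : c1 / (4 * mu) * N%:R = N%:R / (2 * mu) * (c1 / 2)); last first.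
  by field; rewrite gt_eqF.
rewrite (_ : N%:R / U * (1 + ln P%:R / mu) / 2 =
             N%:R / (2 * mu) * ((mu + ln P%:R) / U)); last first.
  by field; rewrite !gt_eqF.
apply: ler_wpM2l; first by apply: divr_ge0 => //; apply: mulr_ge0 => //; exact: ltW.
rewrite ler_pdivlMr //; nra.
Qed.

End Asymptotics.

Theorem theorem4 (R : realType) (mu : R) (Mf : nat -> nat) :
  0 < mu ->
  (* M(P) = Theta(P / log P), M(P) an even positive integer (for large P) *)
  (exists (c1 c2 : R) (P0 : nat), 0 < c1 /\ 0 < c2 /\
     forall P : nat, (P0 <= P)%N ->
       (0 < Mf P)%N /\ ~~ odd (Mf P) /\
       c1 * (P%:R / ln P%:R) <= (Mf P)%:R /\
       (Mf P)%:R <= c2 * (P%:R / ln P%:R)) ->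
  (* Short-Dot with K = P - M/2:  E[T_SD]/N = O(log log P / log P) *)
  (exists (C : R) (P0 : nat), forall P : nat, (P0 <= P)%N ->
     let M := Mf P in let K := (P - M %/ 2)%N in
     forall N : nat, (0 < N)%N -> (P %| N * (P - K + M))%N ->
     forall (d : measure_display) (T : measurableType d)
            (Pr : probability T R) (X : 'I_P -> T -> R),
       indep_rvs Pr X ->
       (forall j, has_proc_law Pr mu
                    (N%:R * (P%:R - K%:R + M%:R) / P%:R) (X j)) ->
       (\int[Pr]_w (T_SD K X w)%:E <=
          (C * (ln (ln P%:R) / ln P%:R) * N%:R)%:E)%E) /\
  (* MDS:  E[T_MDS]/N = Omega(1) *)
  (exists (c : R) (P0 : nat), 0 < c /\ forall P : nat, (P0 <= P)%N ->
     let M := Mf P in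
     forall N : nat, (0 < N)%N ->
     forall (d : measure_display) (T : measurableType d)
            (Pr : probability T R) (X : 'I_P -> T -> R),
       indep_rvs Pr X ->
       (forall j, has_proc_law Pr mu N%:R (X j)) ->
       ((c * N%:R)%:E <= \int[Pr]_w (T_MDS M X w)%:E)%E) /\
  (* Repetition:  E[T_Rep]/N = Omega(1) *)
  (exists (c : R) (P0 : nat), 0 < c /\ forall P : nat, (P0 <= P)%N ->
     let M := Mf P in
     forall (rowOf : 'I_P -> 'I_M), balanced_alloc rowOf ->
     forall N : nat, (0 < N)%N ->
     forall (d : measure_display) (T : measurableType d)
            (Pr : probability T R) (X : 'I_P -> T -> R),
       indep_rvs Pr X ->
       (forall j, has_proc_law Pr mu N%:R (X j)) ->
       ((c * N%:R)%:E <= \int[Pr]_w (T_Rep rowOf X w)%:E)%E) /\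
  (* Uncoded:  E[T_UC]/N = Omega(1) *)
  (exists (c : R) (P0 : nat), 0 < c /\ forall P : nat, (P0 <= P)%N ->
     let M := Mf P in
     forall (rowOf : 'I_P -> 'I_M), balanced_alloc rowOf ->
     forall N : nat, (0 < N)%N ->
       (forall i : 'I_M, row_load rowOf i %| N)%N ->
     forall (d : measure_display) (T : measurableType d)
            (Pr : probability T R) (X : 'I_P -> T -> R),
       indep_rvs Pr X ->
       (forall j, has_proc_law Pr mu (N%:R / (row_load rowOf (rowOf j))%:R) (X j)) ->
       ((c * N%:R)%:E <= \int[Pr]_w (T_UC X w)%:E)%E).
Proof.
move=> mu0 [c1 [c2 [P0 [c10 [c20 hM]]]]].
have [Pb regime] := in_regime_eventually c10 c20 hM.
split; [|split; [|split]].
- exists (3 / 2 * c2 * (1 + (5 + `|ln c1|) / mu)), Pb.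
  move=> P /regime inP M K N N0 _ d T Pr X indepX hX.
  have [_ MP _ _ _] := inP.
  apply: le_trans (expectation_T_SD_le mu0 MP N0 indepX hX) _.
  by rewrite lee_fin; exact: short_dot_rate.
- exists 2^-1, Pb; split => [|P /regime[_ MP _ _ _] M N N0 d T Pr X indepX hX].
    by rewrite invr_gt0.
  exact: expectation_T_MDS_ge.
- exists 2^-1, Pb; split => [|P /regime[_ MP _ _ _] M rowOf balanced N N0 d T Pr X indepX hX].
    by rewrite invr_gt0.
  exact: expectation_T_Rep_ge.
- exists (c1 / (4 * mu)), Pb; split => [|P /regime inP M rowOf balanced N N0 _ d T Pr X indepX hX].
    by rewrite divr_gt0 // mulr_gt0.
  exact: expectation_T_UC_regime_ge mu0 c10 inP balanced N0 indepX hX.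
Qed.
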